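(* Let $G$ be a graph and let $v$ be a cut vertex of $G$ which decomposes $G$ into $G_1=G(V_1)$ and $H=G(U)$, where $H$ is a cycle. Let $f$ be a divisor on $G$. If $f_{N(H)}$ is bad, then $\rho_G(f)=\rho_{G_1}(f_{G/H}-\epsilon_v)$.
   Context: Graphs are finite, undirected, connected, loopless, possibly with multiple edges; $G(W)$ is the induced subgraph on $W$. A cycle is a connected graph with at least two vertices, all of degree $2$. A vertex $v$ is a cut vertex if removing it disconnects $G$; it decomposes $G$ into $G_1=G(V_1)$ and $H=G(U)$ if $V(G)=V_1\cup U$, $V_1\cap U=\{v\}$, both induced subgraphs are connected, and no edge joins $V_1\setminus\{v\}$ to $U\setminus\{v\}$. A divisor is a function $V\to\mathbb{Z}$, $\deg(f)=\sum f(u)$; $\epsilon_v$ is the divisor with value $1$ at $v$ and $0$ elsewhere. Contraction: $f_{G/H}$ is the divisor on $G_1$ with $f_{G/H}(u)=f(u)$ for $u\in V_1\setminus\{v\}$, $f_{G/H}(v)=\sum_{u\in U}f(u)$. Zero: $f_{N(H)}$ is the divisor on $H$ with $f_{N(H)}(u)=f(u)$ for $u\in U\setminus\{v\}$ and $f_{N(H)}(v)=-\sum_{u\in U\setminus\{v\}}f(u)$ (so $\deg f_{N(H)}=0$). Laplacian $\Delta_X(u,u)=\deg(u)$, $\Delta_X(u,w)=-e(u,w)$ for $u\ne w$; $f\sim g$ on $X$ if $g=f+x\Delta_X$, $x$ integral. Effective: all values $\ge0$; L-effective: equivalent to an effective divisor. A degree-$0$ divisor on the cycle $H$ is good if it is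 L-effective on $H$, bad otherwise. The rank $\rho_X(f)$ on a graph $X$ is $-1$ if $f$ is not L-effective on $X$, otherwise the largest $r\ge0$ with $f-\lambda$ L-effective on $X$ for all effective $\lambda$ of degree $r$ on $X$. *)

From mathcomp Require Import all_boot all_order all_algebra.
Set Implicit Arguments. Unset Strict Implicit. Unset Printing Implicit Defensive.
Import Order.TTheory GRing.Theory Num.Theory.
Local Open Scope ring_scope.

(* A finite multigraph on the vertex type V is given by an edge-multiplicity
   function e : V -> V -> nat (e u w = number of edges joining u and w).
   Induced subgraphs G(W) are represented by the vertex subset W : {set V};
   a divisor on G(W) is a function V -> int of which only the values on W
   matter. *)

Definition multigraph (V : finType) (e : V -> V -> nat) : Prop :=
  (forall u w, e u w = e w u) /\ (forall u, e u u = 0%N).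

Definition adjW (V : finType) (e : V -> V -> nat) (W : {set V}) : rel V :=
  fun x y => [&& x \in W, y \in W & (0 < e x y)%N].

Definition connectedW (V : finType) (e : V -> V -> nat) (W : {set V}) : Prop :=
  W != set0 /\ forall x y, x \in W -> y \in W -> connect (adjW e W) x y.

Definition degW (V : finType) (e : V -> V -> nat) (W : {set V}) (u : V) : nat :=
  (\sum_(w in W) e u w)%N.

Definition is_cycleW (V : finType) (e : V -> V -> nat) (W : {set V}) : Prop :=
  [/\ connectedW e W, (2 <= #|W|)%N & forall u, u \in W -> degW e W u = 2%N].

Definition cut_vertex (V : finType) (e : V -> V -> nat) (v : V) : Prop :=
  ~ connectedW e [set~ v].

Definition decomposes (V : finType) (e : V -> V -> nat) (v : V)
  (V1 U : {set V}) : Prop :=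
  [/\ V1 :|: U = [set: V], V1 :&: U = [set v],
      connectedW e V1, connectedW e U &
      forall x y, x \in V1 :\ v -> y \in U :\ v -> e x y = 0%N].

Definition divisor (V : finType) := V -> int.

Definition deg_div (V : finType) (W : {set V}) (f : divisor V) : int :=
  \sum_(u in W) f u.

Definition eps (V : finType) (v : V) : divisor V := fun u => (u == v)%:Z.

Definition sub_div (V : finType) (f g : divisor V) : divisor V :=
  fun u => f u - g u.

Definition lapW (V : finType) (e : V -> V -> nat) (W : {set V})
  (x : V -> int) (u : V) : int :=
  x u * (degW e W u)%:Z - \sum_(w in W | w != u) x w * (e w u)%:Z.

Definition equivW (V : finType) (e : V -> V -> nat) (W : {set V})
  (f g : divisor V) : Prop :=
  exists x : V -> int, forall u, u \in W -> g u = f u + lapW e W x u.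

Definition effectiveW (V : finType) (W : {set V}) (f : divisor V) : Prop :=
  forall u, u \in W -> 0 <= f u.

Definition L_effective (V : finType) (e : V -> V -> nat) (W : {set V})
  (f : divisor V) : Prop :=
  exists g, equivW e W f g /\ effectiveW W g.

Definition rank_ok (V : finType) (e : V -> V -> nat) (W : {set V})
  (f : divisor V) (r : int) : Prop :=
  forall lam : divisor V, effectiveW W lam -> deg_div W lam = r ->
    L_effective e W (sub_div f lam).

Definition is_rank (V : finType) (e : V -> V -> nat) (W : {set V})
  (f : divisor V) (r : int) : Prop :=
  (~ L_effective e W f /\ r = -1)
  \/ (L_effective e W f /\ 0 <= r /\ rank_ok e W f r /\
      forall r', 0 <= r' -> rank_ok e W f r' -> r' <= r).

Definition contr_div (V : finType) (v : V) (U : {set V}) (f : divisor V)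
  : divisor V :=
  fun u => if u == v then \sum_(w in U) f w else f u.

Definition zero_div (V : finType) (v : V) (U : {set V}) (f : divisor V)
  : divisor V :=
  fun u => if u == v then - \sum_(w in U :\ v) f w else f u.

Definition bad (V : finType) (e : V -> V -> nat) (U : {set V})
  (f : divisor V) : Prop := ~ L_effective e U f.

From mathcomp Require Import all_boot all_order all_algebra ring zify.
From Stdlib Require Import Classical.
Import Order.TTheory GRing.Theory Num.Theory.
Set Implicit Arguments. Unset Strict Implicit. Unset Printing Implicit Defensive.
Local Open Scope ring_scope.

(* Let g >= 0 be equivalent to f on G by a firing x. Restricted to the cycle H,
   the same firing moves f_{N(H)} to a divisor agreeing with g on H \ v, so if g
   had no chip on H \ v then f_{N(H)} would be equivalent to 0, i.e. good. Hence g
   has at least one chip on H \ v; moving all of them to v and dropping one gives an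
   effective divisor equivalent to f_{G/H} - e_v on G_1. Conversely, on a cycle
   every divisor of degree one is L-effective (modulo principal divisors the unit
   divisor of the i-th vertex is e_0 - i (e_0 - e_1), and n (e_0 - e_1) ~ 0), so an
   effective representative of f_{G/H} - e_v on G_1 can be glued with one of the
   degree-one divisor (f on H \ v, 1 - sum_{H \ v} f at v) on H. Both directions
   survive subtracting an effective divisor (extended by zero from G_1, resp.
   contracted from G; badness only depends on f off G_1), so the ranks agree. *)


Section Laplacian.

Variables (V : finType) (e : V -> V -> nat).
Implicit Types (W : {set V}) (x y : V -> int).

Lemma lapWD W x y u :
  lapW e W (fun w => x w + y w) u = lapW e W x u + lapW e W y u.
Proof.
rewrite /lapW mulrDl -!addrA; congr (_ + _); rewrite addrCA; congr (_ + _).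
by rewrite -opprD -big_split /=; congr (- _); apply: eq_bigr => w _; rewrite mulrDl.
Qed.

Lemma lapWZ W (k : int) x u : lapW e W (fun w => k * x w) u = k * lapW e W x u.
Proof.
rewrite /lapW mulrBr mulr_sumr -mulrA; congr (_ - _).
by apply: eq_bigr => w _; rewrite mulrA.
Qed.

Hypothesis e_multigraph : multigraph e.

Lemma lapW_diff W x u : lapW e W x u = \sum_(w in W) (x u - x w) * (e w u)%:Z.
Proof.
have [e_sym e0] := e_multigraph.
rewrite /lapW /degW (big_morph Posz PoszD (erefl 0%:Z)) big_distrr /=.
under [RHS]eq_bigr => w _ do rewrite mulrBl.
rewrite sumrB; congr (_ - _); first by apply: eq_bigr => w _; rewrite e_sym.
rewrite [RHS](bigID (pred1 u)) /= [X in _ = X + _]big1 ?add0r //.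
by move=> w /andP[_ /eqP ->]; rewrite e0 mulr0.
Qed.

Lemma lapW_shift W x y (c : int) u :
  (forall w, w \in W -> y w = x w + c) -> u \in W -> lapW e W y u = lapW e W x u.
Proof.
move=> hy uW; rewrite !lapW_diff; apply: eq_bigr => w wW.
by rewrite !hy // opprD addrACA subrr addr0.
Qed.

(* Each edge contributes opposite amounts to the Laplacians at its two ends. *)
Lemma sum_lapW W x : \sum_(u in W) lapW e W x u = 0.
Proof.
have [e_sym _] := e_multigraph.
set S := \sum_(u in W) _; have : S = - S.
  rewrite {1}/S; under eq_bigr => u _ do rewrite lapW_diff.
  rewrite exchange_big /= /S -sumrN; apply: eq_bigr => u _.
  rewrite lapW_diff -sumrN; apply: eq_bigr => w _.
  by rewrite e_sym -mulNr opprB.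
move/eqP; rewrite -subr_eq0 opprK -mulr2n -mulr_natr mulf_eq0 /= orbF.
by move/eqP.
Qed.

End Laplacian.

Definition principalW (V : finType) (e : V -> V -> nat) (W : {set V})
  (h : divisor V) : Prop :=
  exists x, forall u, u \in W -> h u = lapW e W x u.

Section PrincipalDivisors.

Variables (V : finType) (e : V -> V -> nat) (W : {set V}).
Implicit Types (f g h : divisor V).

Lemma eq_principalW h h' :
  (forall u, u \in W -> h u = h' u) -> principalW e W h -> principalW e W h'.
Proof. by move=> hh [x hx]; exists x => u uW; rewrite -hh // hx. Qed.

Lemma principalW0 : principalW e W (fun _ => 0).
Proof. by exists (fun _ => 0) => u _; rewrite /lapW mul0r big1 ?subr0. Qed.

Lemma principalWD h h' :
  principalW e W h -> principalW e W h' -> principalW e W (fun u => h u + h' u).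
Proof.
move=> [x hx] [y hy]; exists (fun w => x w + y w) => u uW.
by rewrite lapWD -hx -?hy.
Qed.

Lemma principalWZ (k : int) h :
  principalW e W h -> principalW e W (fun u => k * h u).
Proof. by move=> [x hx]; exists (fun w => k * x w) => u uW; rewrite lapWZ -hx. Qed.

Lemma principalW_sum (m : nat) (F : nat -> divisor V) :
  (forall i, (i < m)%N -> principalW e W (F i)) ->
  principalW e W (fun u => \sum_(i < m) F i u).
Proof.
elim: m => [|m IH] hF.
  by apply: eq_principalW principalW0 => u _; rewrite big_ord0.
apply: eq_principalW (principalWD (IH _) (hF m _)) => //.
  by move=> u _; rewrite big_ord_recr.
by move=> i /ltnW; apply: hF.
Qed.

Lemma L_effective_principal f g :
  principalW e W (fun u => g u - f u) -> effectiveW W g -> L_effective e W f.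
Proof.
by move=> [x hx] geff; exists g; split => //; exists x => u uW; rewrite -hx // subrKC.
Qed.

Lemma eq_L_effective f f' :
  (forall u, u \in W -> f u = f' u) -> L_effective e W f -> L_effective e W f'.
Proof.
by move=> hf [g [[x hx] geff]]; exists g; split => //; exists x => u uW; rewrite hx // hf.
Qed.

End PrincipalDivisors.

Section Decomposition.

Variables (V : finType) (e : V -> V -> nat) (v : V) (V1 U : {set V}).
Hypotheses (e_multigraph : multigraph e) (hdec : decomposes e v V1 U).

Lemma in_V1_U u : (u \in V1) && (u \in U) = (u == v).
Proof. by case: hdec => _ hI _ _ _; rewrite -in_setI hI in_set1. Qed.

Lemma in_V1_or_U u : (u \in V1) || (u \in U).
Proof. by case: hdec => hU _ _ _ _; rewrite -in_setU hU in_setT. Qed.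

Lemma cut_in_V1 : v \in V1.
Proof. by have := in_V1_U v; rewrite eqxx => /andP[]. Qed.

Lemma cut_in_U : v \in U.
Proof. by have := in_V1_U v; rewrite eqxx => /andP[]. Qed.

Lemma notin_V1 u : u \in U :\ v -> (u \in V1) = false.
Proof.
by rewrite !inE => /andP[uv uU]; have := in_V1_U u; rewrite uU (negbTE uv) andbT.
Qed.

Lemma notin_U u : u \in V1 :\ v -> (u \in U) = false.
Proof. by rewrite !inE => /andP[uv uV1]; have := in_V1_U u; rewrite uV1 (negbTE uv). Qed.

Lemma sum_setT_V1_Uv (F : V -> int) :
  \sum_(w in [set: V]) F w = \sum_(w in V1) F w + \sum_(w in U :\ v) F w.
Proof.
rewrite -bigU /=; last first.
  by apply/pred0P => w /=; case: (boolP (w \in U :\ v)) => [/notin_V1 ->|_]; rewrite ?andbF.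
apply: eq_bigl => w; rewrite !inE /=; have := in_V1_or_U w; have := in_V1_U w.
by case: (w \in V1); case: (w \in U); case: (w == v).
Qed.

Lemma sum_setT_V1v_U (F : V -> int) :
  \sum_(w in [set: V]) F w = \sum_(w in V1 :\ v) F w + \sum_(w in U) F w.
Proof.
rewrite -bigU /=; last first.
  by apply/pred0P => w /=; case: (boolP (w \in V1 :\ v)) => // /notin_U ->.
apply: eq_bigl => w; rewrite !inE /=; have := in_V1_or_U w; have := in_V1_U w.
by case: (w \in V1); case: (w \in U); case: (w == v).
Qed.

Lemma lapW_setT_V1 x u : u \in V1 :\ v -> lapW e [set: V] x u = lapW e V1 x u.
Proof.
move=> uV1v; have [e_sym _] := e_multigraph; have [_ _ _ _ sep] := hdec.
rewrite !lapW_diff // sum_setT_V1_Uv [X in _ + X]big1 ?addr0 // => w wUv.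
by rewrite e_sym sep ?mulr0.
Qed.

Lemma lapW_setT_U x u : u \in U :\ v -> lapW e [set: V] x u = lapW e U x u.
Proof.
move=> uUv; have [_ _ _ _ sep] := hdec.
rewrite !lapW_diff // sum_setT_V1v_U [X in X + _]big1 ?add0r // => w wV1v.
by rewrite sep ?mulr0.
Qed.

Lemma lapW_setT_cut x : lapW e [set: V] x v = lapW e V1 x v + lapW e U x v.
Proof.
rewrite !lapW_diff // sum_setT_V1_Uv [X in _ = _ + X](big_setD1 _ cut_in_U) /=.
by rewrite subrr mul0r add0r.
Qed.

Lemma sum_Uv_equiv (g g' : divisor V) x :
  (forall u, u \in [set: V] -> g' u = g u + lapW e [set: V] x u) ->
  \sum_(w in U :\ v) g' w = \sum_(w in U :\ v) g w - lapW e U x v.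
Proof.
move=> hg'; under eq_bigr => w wUv do rewrite hg' ?inE // (lapW_setT_U x wUv).
rewrite big_split /=; congr (_ + _); apply/eqP; rewrite -subr_eq0 opprK addrC.
by rewrite -(big_setD1 _ cut_in_U) /= sum_lapW.
Qed.

(* Without a chip of g' on U :\ v, the firing x restricted to H would give g_{N(H)} ~ 0. *)
Lemma chips_on_Uv_pos (g g' : divisor V) x :
  bad e U (zero_div v U g) ->
  (forall u, u \in [set: V] -> g' u = g u + lapW e [set: V] x u) ->
  effectiveW [set: V] g' -> 1 <= \sum_(w in U :\ v) g' w.
Proof.
move=> hbad hg' g'eff.
have d0 : 0 <= \sum_(w in U :\ v) g' w by apply: sumr_ge0 => w _; apply: g'eff.
rewrite -gtz0_ge1 lt_def d0 andbT; apply: contra_notN hbad => /eqP d00.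
exists (fun _ => 0); split => //; exists x => u uU; rewrite /zero_div.
case: eqP => [->|/eqP uv].
  by apply/eqP; rewrite eq_sym addrC -opprB oppr_eq0 -(sum_Uv_equiv hg') d00.
have uUv : u \in U :\ v by rewrite !inE uv.
rewrite -(lapW_setT_U _ uUv) -hg' ?inE //; apply/esym.
by apply: (psumr_eq0P _ d00) => // w _; apply: g'eff.
Qed.

Lemma L_effective_contr (g : divisor V) :
  bad e U (zero_div v U g) -> L_effective e [set: V] g ->
  L_effective e V1 (sub_div (contr_div v U g) (eps v)).
Proof.
move=> hbad [g' [[x hg'] g'eff]].
have d1 := chips_on_Uv_pos hbad hg' g'eff.
exists (fun u => sub_div (contr_div v U g) (eps v) u + lapW e V1 x u).
split; first by exists x.
move=> u uV1; rewrite /sub_div /contr_div /eps; case: eqP => [->|/eqP uv].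
  have := g'eff v (in_setT v); rewrite hg' ?inE // lapW_setT_cut => g'v.
  have := sum_Uv_equiv hg'; rewrite (big_setD1 _ cut_in_U) /=.
  by set S := \sum_(i in U :\ v) g i; set S' := \sum_(i in U :\ v) g' i; lia.
have uV1v : u \in V1 :\ v by rewrite !inE uv.
rewrite /= subr0 -(lapW_setT_V1 _ uV1v) -hg' ?inE //; exact: g'eff.
Qed.

Definition glue (y z : V -> int) : V -> int :=
  fun u => if u \in V1 then y u else z u + (y v - z v).

Lemma lapW_glue_V1 y z u : u \in V1 -> lapW e V1 (glue y z) u = lapW e V1 y u.
Proof.
move=> uV1; apply: (lapW_shift e_multigraph (c := 0)) => // w wV1.
by rewrite /glue wV1 addr0.
Qed.

Lemma lapW_glue_U y z u : u \in U -> lapW e U (glue y z) u = lapW e U z u.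
Proof.
move=> uU; apply: (lapW_shift e_multigraph (c := y v - z v)) => // w wU; rewrite /glue.
case: ifP => // wV1; have := in_V1_U w; rewrite wV1 wU => /esym/eqP ->.
by rewrite addrCA subrr addr0.
Qed.

Lemma L_effective_of_contr (g : divisor V) :
  (forall b : divisor V, deg_div U b = 1 -> L_effective e U b) ->
  L_effective e V1 (sub_div (contr_div v U g) (eps v)) -> L_effective e [set: V] g.
Proof.
move=> hcyc [a' [[y hy] a'eff]]; have vV1 := cut_in_V1; have vU := cut_in_U.
pose b : divisor V := fun u => if u == v then 1 - \sum_(w in U :\ v) g w else g u.
have [b' [[z hz] b'eff]] : L_effective e U b.
  apply: hcyc; rewrite /deg_div (big_setD1 _ vU) /= /b eqxx.
  by rewrite (eq_bigr g) ?subrK // => w; rewrite !inE => /andP[/negbTE -> _].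
exists (fun u => g u + lapW e [set: V] (glue y z) u); split; first by exists (glue y z).
move=> u _; have [->|uv] := eqVneq u v.
  rewrite lapW_setT_cut lapW_glue_V1 // lapW_glue_U //.
  have := a'eff v vV1; have := b'eff v vU; rewrite hy // hz //.
  rewrite /sub_div /contr_div /eps /b eqxx (big_setD1 _ vU) /=.
  by set S := \sum_(i in U :\ v) g i; lia.
have [uV1|uV1] := boolP (u \in V1).
  have uV1v : u \in V1 :\ v by rewrite !inE uv.
  rewrite (lapW_setT_V1 _ uV1v) lapW_glue_V1 //.
  by have := a'eff u uV1; rewrite hy // /sub_div /contr_div /eps (negbTE uv) subr0.
have uU : u \in U by have := in_V1_or_U u; rewrite (negbTE uV1).
have uUv : u \in U :\ v by rewrite !inE uv.
rewrite (lapW_setT_U _ uUv) lapW_glue_U //.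
by have := b'eff u uU; rewrite hz // /b (negbTE uv).
Qed.

Lemma rank_ok_contr (f : divisor V) r :
  bad e U (zero_div v U f) -> rank_ok e [set: V] f r ->
  rank_ok e V1 (sub_div (contr_div v U f) (eps v)) r.
Proof.
move=> hbad hok mu mueff mudeg.
pose lam : divisor V := fun u => if u \in V1 then mu u else 0.
have lam_Uv u : u \in U :\ v -> lam u = 0 by rewrite /lam => /notin_V1 ->.
have lameff : effectiveW [set: V] lam by move=> u _; rewrite /lam; case: ifP => // /mueff.
have lamdeg : deg_div [set: V] lam = r.
  rewrite -mudeg /deg_div sum_setT_V1_Uv [X in _ + X]big1 ?addr0 => [|w /lam_Uv //].
  by apply: eq_bigr => u uV1; rewrite /lam uV1.
have sum_lam : \sum_(w in U) lam w = mu v.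
  rewrite (big_setD1 _ cut_in_U) /= big1 ?addr0 => [|w /lam_Uv //].
  by rewrite /lam cut_in_V1.
have hbad' : bad e U (zero_div v U (sub_div f lam)).
  apply: contra_not hbad; apply: eq_L_effective => u uU; rewrite /zero_div /sub_div.
  case: eqP => [_|/eqP uv]; last by rewrite lam_Uv ?inE ?uv // subr0.
  by congr (- _); apply: eq_bigr => w /lam_Uv ->; rewrite subr0.
apply: eq_L_effective (L_effective_contr hbad' (hok lam lameff lamdeg)) => u uV1.
rewrite /sub_div /contr_div; case: eqP => [->|_]; first by rewrite sumrB sum_lam; ring.
by rewrite /lam uV1; ring.
Qed.

Lemma rank_ok_of_contr (f : divisor V) r :
  (forall b : divisor V, deg_div U b = 1 -> L_effective e U b) ->
  rank_ok e V1 (sub_div (contr_div v U f) (eps v)) r -> rank_ok e [set: V] f r.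
Proof.
move=> hcyc hok lam lameff lamdeg.
have mueff : effectiveW V1 (contr_div v U lam).
  move=> u _; rewrite /contr_div; case: eqP => _; last exact: lameff.
  by apply: sumr_ge0 => w _; apply: lameff.
have mudeg : deg_div V1 (contr_div v U lam) = r.
  rewrite -lamdeg /deg_div sum_setT_V1v_U (big_setD1 _ cut_in_V1) /=.
  rewrite addrC /contr_div eqxx; congr (_ + _).
  by apply: eq_bigr => u; rewrite !inE => /andP[/negbTE -> _].
apply: (L_effective_of_contr hcyc); apply: eq_L_effective (hok _ mueff mudeg) => u _.
by rewrite /sub_div /contr_div; case: eqP => _; rewrite ?sumrB; ring.
Qed.

End Decomposition.

Lemma is_rank_transfer (V : finType) (e : V -> V -> nat) (W W' : {set V})
  (f f' : divisor V) :
  (L_effective e W f <-> L_effective e W' f') ->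
  (forall r, rank_ok e W f r <-> rank_ok e W' f' r) ->
  forall r, is_rank e W f r -> is_rank e W' f' r.
Proof.
move=> hL hR r [[hn ->]|[hl [r0 [hok hmax]]]]; [left | right].
  by split => //; rewrite -hL.
split; first exact/hL.
by do !split => //; [apply/hR | move=> r' r'0 /hR; apply: hmax].
Qed.

Definition cyc_succ (n i : nat) : nat := if i.+1 == n then 0 else i.+1.
Definition cyc_pred (n i : nat) : nat := if i == 0 then n.-1 else i.-1.

Lemma cyc_succ_lt n i : (i < n)%N -> (cyc_succ n i < n)%N.
Proof. by rewrite /cyc_succ; case: eqP; lia. Qed.

Lemma cyc_pred_lt n i : (i < n)%N -> (cyc_pred n i < n)%N.
Proof. by rewrite /cyc_pred; case: eqP; lia. Qed.

Lemma cyc_succ_neq n i : (2 <= n)%N -> (i < n)%N -> cyc_succ n i != i.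
Proof. by rewrite /cyc_succ; case: (i.+1 =P n) => *; apply/eqP; lia. Qed.

Lemma cyc_pred_neq n i : (2 <= n)%N -> (i < n)%N -> cyc_pred n i != i.
Proof. by rewrite /cyc_pred; case: (i =P 0) => *; apply/eqP; lia. Qed.

Lemma cyc_succ_pred_neq n i : (3 <= n)%N -> (i < n)%N -> cyc_succ n i != cyc_pred n i.
Proof.
by rewrite /cyc_succ /cyc_pred; case: (i.+1 =P n); case: (i =P 0) => *; apply/eqP; lia.
Qed.

Lemma cyc_succS n i : (i.+1 < n)%N -> cyc_succ n i = i.+1.
Proof. by rewrite /cyc_succ => /ltn_eqF ->. Qed.

Lemma cyc_succ_last n : (0 < n)%N -> cyc_succ n n.-1 = 0.
Proof. by move=> n0; rewrite /cyc_succ prednK // eqxx. Qed.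

Lemma divz_nat (K : int) (n : nat) :
  (0 < n)%N -> exists q : int, exists2 m : nat, (m < n)%N & K = q * n%:Z + m%:Z.
Proof.
move=> n0; have nz : n%:Z != 0 by rewrite eqz_nat -lt0n.
exists (K %/ n%:Z)%Z, `|(K %% n%:Z)%Z|%N.
  by rewrite -ltz_nat gez0_abs ?modz_ge0 // ltz_pmod // ltz_nat.
by rewrite gez0_abs ?modz_ge0 // -divz_eq.
Qed.

Section TwoRegular.

Variables (V : finType) (e : V -> V -> nat) (W : {set V}).
Hypotheses (e_multigraph : multigraph e)
           (deg2 : forall u, u \in W -> degW e W u = 2).

Lemma deg2_other_nbr u a :
  u \in W -> a \in W -> (e u a < 2)%N -> exists t, [/\ t \in W, t != a & (0 < e u t)%N].
Proof.
move=> uW aW ua; have := deg2 uW; rewrite /degW (bigD1 a) //=.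
case: (pickP [pred t | [&& t \in W, t != a & (0 < e u t)%N]]) => [t /and3P[] | none].
  by exists t.
suff /eqP -> : (\sum_(t in W | t != a) e u t == 0)%N by lia.
rewrite sum_nat_eq0; apply/forall_inP => t /andP[tW ta].
by have := none t; rewrite /= tW ta /= lt0n => /negbFE.
Qed.

Lemma deg2_nbr u : u \in W -> exists2 t, t \in W & (0 < e u t)%N.
Proof.
have [_ e0] := e_multigraph.
by move=> uW; have [|t [tW _ ut]] := deg2_other_nbr uW uW; [rewrite e0 | exists t].
Qed.

Lemma deg2_two_nbrs u a b :
  u \in W -> a \in W -> b \in W -> a != b -> (0 < e u a)%N -> (0 < e u b)%N ->
  forall w, w \in W -> e u w = ((w == a) + (w == b))%N.
Proof.
move=> uW aW bW ab ua ub w wW; have := deg2 uW.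
rewrite /degW (bigD1 a) //= (bigD1 b) /=; last by rewrite bW eq_sym.
set R := (\sum_(t | _) _)%N => hdeg; have /eqP R0 : R = 0 by lia.
have [->|wa] := eqVneq w a; first by rewrite (negbTE ab); lia.
have [->|wb] := eqVneq w b; first by lia.
move: R0; rewrite sum_nat_eq0 => /forallP/(_ w)/implyP; rewrite wW wa wb.
by move=> /(_ isT)/eqP.
Qed.

Lemma deg2_double_nbr u a :
  u \in W -> a \in W -> (2 <= e u a)%N ->
  forall w, w \in W -> e u w = ((w == a) + (w == a))%N.
Proof.
move=> uW aW ua w wW; have := deg2 uW; rewrite /degW (bigD1 a) //=.
set R := (\sum_(t | _) _)%N => hdeg; have /eqP R0 : R = 0 by lia.
have [->|wa] := eqVneq w a; first by lia.
move: R0; rewrite sum_nat_eq0 => /forallP/(_ w)/implyP; rewrite wW wa.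
by move=> /(_ isT)/eqP.
Qed.

Definition simple_path (k : nat) (c : nat -> V) : Prop :=
  [/\ forall i, (i < k)%N -> c i \in W,
      {in gtn k &, injective c} &
      forall i, (i.+1 < k)%N -> (0 < e (c i) (c i.+1))%N].

Lemma simple_path_size k c : simple_path k c -> (k <= #|W|)%N.
Proof.
case=> cW cinj _.
have inj : injective (fun i : 'I_k => c i).
  by move=> i j /(cinj _ _ (ltn_ord i) (ltn_ord j)) /val_inj.
rewrite -[k]card_ord -(card_imset _ inj); apply: subset_leq_card.
by apply/subsetP => _ /imsetP[i _ ->]; apply: cW.
Qed.

Lemma simple_path_extend k c t :
  simple_path k c -> t \in W -> (forall i, (i < k)%N -> c i != t) ->
  k = 0 \/ (0 < e (c k.-1) t)%N ->
  simple_path k.+1 (fun i => if i == k then t else c i).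
Proof.
case=> cW cinj cadj tW tnew hk; split.
- by move=> i hi; case: eqP => // /eqP ik; apply: cW; lia.
- move=> i j; rewrite !inE => hi hj; case: (i =P k) => ik; case: (j =P k) => jk.
  + by rewrite ik jk.
  + by move=> h; have := tnew j; rewrite h eqxx => /(_ _)/negP; lia.
  + by move=> h; have := tnew i; rewrite h eqxx => /(_ _)/negP; lia.
  + by move=> h; apply: (cinj i j); rewrite ?inE //; lia.
- move=> i hi; have -> : (i == k) = false by apply/eqP; lia.
  case: (i.+1 =P k) => [ik | nik]; last by apply: cadj; lia.
  by case: hk => [|]; [lia | rewrite -ik].
Qed.

(* Simple paths have at most #|W| vertices, so some simple path cannot be extended. *)
Lemma exists_maximal_simple_path (c0 : V) :
  exists k c, simple_path k c /\ forall c', ~ simple_path k.+1 c'.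
Proof.
apply: NNPP => nomax.
suff [c hc] : exists c, simple_path #|W|.+1 c by have := simple_path_size hc; rewrite ltnn.
elim: #|W|.+1 => [|k [c hc]]; first by exists (fun _ => c0); split.
apply: NNPP => noext; apply: nomax; exists k, c; split => // c' hc'.
by apply: noext; exists c'.
Qed.

Definition cyclic_enum (n : nat) (c : nat -> V) : Prop :=
  [/\ (2 <= n)%N, forall i, (i < n)%N -> c i \in W,
      {in gtn n &, injective c} &
      forall i, (i < n)%N -> forall w, w \in W -> w != c i ->
        e (c i) w = ((w == c (cyc_succ n i)) + (w == c (cyc_pred n i)))%N].

(* The range of c is closed under adjacency in G(W). *)
Lemma cyclic_enum_onto n c :
  connectedW e W -> cyclic_enum n c -> forall w, w \in W -> exists2 i, (i < n)%N & c i = w.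
Proof.
move=> [_ Wconn] [n2 cW _ cedge] w wW; have [e_sym e0] := e_multigraph.
have n0 : (0 < n)%N by apply: leq_trans n2.
pose S := [pred z | [exists i : 'I_n, c i == z]].
have S_step x y : adjW e W x y -> x \in S -> y \in S.
  move=> /and3P[_ yW xy] /existsP[i /eqP ci]; subst x.
  have yci : y != c i by apply: contraTneq xy => ->; rewrite e0.
  move: xy; rewrite cedge //.
  have [-> _|ys] := eqVneq y (c (cyc_succ n i)).
    by apply/existsP; exists (Ordinal (cyc_succ_lt (ltn_ord i))).
  have [-> _|//] := eqVneq y (c (cyc_pred n i)).
  by apply/existsP; exists (Ordinal (cyc_pred_lt (ltn_ord i))).
have S_closed : closed (adjW e W) S.
  move=> x y xy; apply/idP/idP; first exact: S_step.
  by apply: S_step; move: xy => /and3P[xW yW xy]; rewrite /adjW xW yW e_sym.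
have := closed_connect S_closed (Wconn _ _ (cW 0 n0) wW).
have -> : c 0 \in S by apply/existsP; exists (Ordinal n0).
by move=> /esym /existsP[i /eqP ci]; exists i.
Qed.

Section MaximalPath.

Variables (k : nat) (c : nat -> V).
Hypotheses (W_ne : W != set0) (c_path : simple_path k c)
           (c_max : forall c', ~ simple_path k.+1 c').

Lemma maxpath_adj_prev i : (0 < i)%N -> (i < k)%N -> (0 < e (c i) (c i.-1))%N.
Proof.
have [e_sym _] := e_multigraph; have [_ _ cadj] := c_path.
by move=> i0 ik; rewrite e_sym; have := cadj i.-1; rewrite prednK //; apply.
Qed.

Lemma maxpath_pos : (0 < k)%N.
Proof.
case: (posnP k) => // k0; have [w0 w0W] := set0Pn _ W_ne; exfalso.
by apply: (c_max (simple_path_extend c_path w0W _ (or_introl k0))) => i; rewrite k0.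
Qed.

Lemma maxpath_last_nbr t :
  t \in W -> (0 < e (c k.-1) t)%N -> exists2 j, (j < k)%N & c j = t.
Proof.
move=> tW yt; have [/existsP[j /eqP <-]|tnew] := boolP [exists j : 'I_k, c j == t].
  by exists j.
exfalso; apply: (c_max (simple_path_extend c_path tW _ (or_intror yt))) => i ik.
by apply: contra tnew => /eqP cit; apply/existsP; exists (Ordinal ik); rewrite /= cit.
Qed.

Lemma maxpath_ge2 : (2 <= k)%N.
Proof.
have [_ e0] := e_multigraph; have [cW _ _] := c_path; have k0 := maxpath_pos.
have [t tW yt] := deg2_nbr (cW k.-1 ltac:(by rewrite ltn_predL)).
have [j jk cjt] := maxpath_last_nbr tW yt.
case: (ltnP 1 k) => // k1; have jk1 : j = k.-1 by lia.
by move: yt; rewrite -cjt jk1 e0.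
Qed.

(* A double edge uses up the degrees of both c k.-2 and c k.-1, so k = 2. *)
Lemma maxpath_double_edge : (2 <= e (c k.-1) (c k.-2))%N -> cyclic_enum k c.
Proof.
move=> ya; have [e_sym _] := e_multigraph; have [cW cinj _] := c_path.
have k2 := maxpath_ge2.
have k_eq2 : k = 2.
  apply/eqP; rewrite eqn_leq k2 andbT leqNgt; apply/negP => k3.
  have aW : c k.-2 \in W by apply: cW; lia.
  have yW : c k.-1 \in W by apply: cW; lia.
  have bW : c k.-2.-1 \in W by apply: cW; lia.
  have : (0 < e (c k.-2) (c k.-2.-1))%N by apply: maxpath_adj_prev; lia.
  rewrite (deg2_double_nbr aW yW _ bW); last by rewrite e_sym.
  have /negbTE -> // : c k.-2.-1 != c k.-1 by rewrite (inj_in_eq cinj) ?inE; lia.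
have := c_path; rewrite k_eq2 in ya * => -[cW2 cinj2 _].
split => // i ik w wW _; have c0W := cW2 0 isT; have c1W := cW2 1 isT.
case: i ik => [|[|//]] _ /=; last by rewrite (deg2_double_nbr c1W c0W).
by rewrite (deg2_double_nbr c0W c1W) // e_sym.
Qed.

Lemma maxpath_simple_edge_closes :
  (e (c k.-1) (c k.-2) < 2)%N -> (3 <= k)%N /\ (0 < e (c k.-1) (c 0))%N.
Proof.
move=> ya; have [e_sym e0] := e_multigraph; have [cW cinj cadj] := c_path.
have k2 := maxpath_ge2.
have yW : c k.-1 \in W by apply: cW; lia.
have aW : c k.-2 \in W by apply: cW; lia.
have [t [tW ta yt]] := deg2_other_nbr yW aW ya.
have [j jk cjt] := maxpath_last_nbr tW yt.
have jk1 : j != k.-1 by apply: contraTneq yt => jk1; rewrite -cjt jk1 e0.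
have jk2 : j != k.-2 by apply: contraNneq ta => jk2; rewrite -cjt jk2.
suff j0 : j = 0 by split; [lia | move: yt; rewrite -cjt j0].
(* Otherwise c j would have the three distinct neighbours c j.-1, c j.+1 and c k.-1 *)
case: (posnP j) => // j0; exfalso.
have jk3 : (j.+1 < k.-1)%N by lia.
have jm : (j.-1 < k)%N by lia.
have jp : (j.+1 < k)%N by lia.
have nbrs_ne : c j.-1 != c j.+1 by rewrite (inj_in_eq cinj) ?inE; lia.
have y_ne_m : c k.-1 != c j.-1 by rewrite (inj_in_eq cinj) ?inE; lia.
have y_ne_p : c k.-1 != c j.+1 by rewrite (inj_in_eq cinj) ?inE; lia.
have := deg2_two_nbrs (cW _ jk) (cW _ jm) (cW _ jp) nbrs_ne (maxpath_adj_prev j0 jk)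
  (cadj _ jp) yW.
by rewrite (negbTE y_ne_m) (negbTE y_ne_p) e_sym cjt => yt0; move: yt; rewrite yt0.
Qed.

Lemma maxpath_simple_edge_enum : (e (c k.-1) (c k.-2) < 2)%N -> cyclic_enum k c.
Proof.
move=> ya; have [e_sym _] := e_multigraph; have [cW cinj cadj] := c_path.
have [k3 y0] := maxpath_simple_edge_closes ya.
split => [|||i ik w wW _]; [lia | exact: cW | exact: cinj |].
have sk := cyc_succ_lt ik; have pk := cyc_pred_lt ik.
apply: deg2_two_nbrs (cW _ ik) (cW _ sk) (cW _ pk) _ _ _ _ wW.
- by rewrite (inj_in_eq cinj) // cyc_succ_pred_neq.
- case: (ltnP i.+1 k) => ik1; first by rewrite cyc_succS //; apply: cadj.
  have -> : i = k.-1 by lia.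
  by rewrite cyc_succ_last //; lia.
- case: i ik {sk pk} => [|i] ik; first by rewrite /cyc_pred /= e_sym.
  by rewrite /cyc_pred /= e_sym; apply: cadj.
Qed.

Lemma maxpath_cyclic_enum : cyclic_enum k c.
Proof.
case: (leqP 2 (e (c k.-1) (c k.-2))).
  exact: maxpath_double_edge.
exact: maxpath_simple_edge_enum.
Qed.

End MaximalPath.

Lemma two_regular_cyclic_enum : W != set0 -> exists n c, cyclic_enum n c.
Proof.
move=> W_ne; have [w0 _] := set0Pn _ W_ne.
have [k [c [c_path c_max]]] := exists_maximal_simple_path w0.
by exists k, c; apply: maxpath_cyclic_enum.
Qed.

Section DegreeOne.

Variables (n : nat) (c : nat -> V).
Hypotheses (c_enum : cyclic_enum n c)
           (c_onto : forall w, w \in W -> exists2 i, (i < n)%N & c i = w).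

Local Notation E i := (eps (c i)).
Local Notation D i u := (E i u - E (cyc_succ n i) u).

Lemma principal_fire j :
  (j < n)%N ->
  principalW e W (fun u => 2 * E j u - E (cyc_succ n j) u - E (cyc_pred n j) u).
Proof.
move=> jn; have [n2 cW cinj cedge] := c_enum.
exists (fun w => (w == c j)%:Z) => u uW; rewrite /lapW /eps.
have [->|ucj] := eqVneq u (c j).
  have sn := cyc_succ_lt jn; have pn := cyc_pred_lt jn.
  rewrite !(inj_in_eq cinj) // ![j == _]eq_sym.
  rewrite (negbTE (cyc_succ_neq n2 jn)) (negbTE (cyc_pred_neq n2 jn)).
  rewrite deg2 ?cW // big1 => [|w /andP[_ /negbTE ->]]; last by rewrite mul0r.
  by [].
rewrite (bigD1 (c j)) /=; last by rewrite cW // eq_sym ucj.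
rewrite eqxx big1; last by move=> w /andP[_ /negbTE ->]; rewrite mul0r.
by rewrite cedge // PoszD /=; ring.
Qed.

Lemma principal_D_sub_D0 i : (i < n)%N -> principalW e W (fun u => D i u - D 0 u).
Proof.
elim: i => [|i IH] ilt; first by apply: eq_principalW (principalW0 e W) => u _; ring.
apply: eq_principalW (principalWD (IH (ltnW ilt)) (principal_fire ilt)) => u _.
by rewrite /cyc_pred /= (cyc_succS ilt); ring.
Qed.

Lemma principal_E0_sub i :
  (i < n)%N -> principalW e W (fun u => E 0 u - i%:Z * D 0 u - E i u).
Proof.
elim: i => [|i IH] ilt; first by apply: eq_principalW (principalW0 e W) => u _; ring.
apply: eq_principalW (principalWD (IH (ltnW ilt)) (principal_D_sub_D0 (ltnW ilt))).
by move=> u _; rewrite (cyc_succS ilt) -addn1 PoszD; ring.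
Qed.

Lemma principal_n_D0 : principalW e W (fun u => n%:Z * D 0 u).
Proof.
have [n2 _ _ _] := c_enum; have n0 : (0 < n)%N by lia.
have n1 : (n.-1 < n)%N by lia.
apply: eq_principalW
  (principalWZ (-1) (principalWD (principal_E0_sub n1) (principal_D_sub_D0 n1))) => u _.
have -> : n%:Z = (n.-1)%:Z + 1 by rewrite -[1]/(Posz 1) -PoszD addn1 prednK.
by rewrite (cyc_succ_last n0); ring.
Qed.

Lemma sum_enum_eps (b : divisor V) u :
  u \in W -> \sum_(i < n) b (c i) * E i u = b u.
Proof.
move=> uW; have [_ _ cinj _] := c_enum; have [i0 i0n <-] := c_onto uW.
rewrite (bigD1 (Ordinal i0n)) //= big1 ?addr0; first by rewrite /eps eqxx mulr1.
move=> j ji0; have jn := ltn_ord j; rewrite /eps (inj_in_eq cinj) //.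
suff /negbTE -> : i0 != j by rewrite mulr0.
by apply: contra ji0 => /eqP i0j; apply/eqP/val_inj; rewrite /= i0j.
Qed.

Lemma deg_div_enum (b : divisor V) : deg_div W b = \sum_(i < n) b (c i).
Proof.
have [_ cW _ _] := c_enum.
rewrite /deg_div -(eq_bigr _ (fun u uW => sum_enum_eps b uW)) exchange_big /=.
apply: eq_bigr => i _; rewrite -mulr_sumr (bigD1 (c i)) ?cW //= /eps eqxx.
by rewrite big1 ?addr0 ?mulr1 // => w /andP[_ /negbTE ->].
Qed.

Lemma principal_deg1 (b : divisor V) :
  deg_div W b = 1 ->
  principalW e W (fun u => E 0 u - (\sum_(i < n) b (c i) * i%:Z) * D 0 u - b u).
Proof.
rewrite deg_div_enum => b1.
apply: eq_principalW (principalW_sum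
  (F := fun i u => b (c i) * (E 0 u - i%:Z * D 0 u - E i u))
  (fun i ilt => principalWZ _ (principal_E0_sub ilt))) => u uW.
rewrite /= -(sum_enum_eps b uW); set d0 := D 0 u; set x0 := E 0 u.
rewrite -[in RHS](mul1r x0) -[in RHS]b1 !mulr_suml -!sumrB.
by apply: eq_bigr => i _; ring.
Qed.

Lemma cyclic_enum_deg1_L_effective (b : divisor V) :
  deg_div W b = 1 -> L_effective e W b.
Proof.
move=> b1; have [n2 _ _ _] := c_enum; have n0 : (0 < n)%N by lia.
have [q [m mn Kqm]] := divz_nat (\sum_(i < n) b (c i) * i%:Z) n0.
apply: (@L_effective_principal _ _ _ _ (E m)); last by move=> u _; rewrite /eps.
apply: eq_principalW (principalWD (principalWD (principal_deg1 b1)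
  (principalWZ q principal_n_D0)) (principalWZ (-1) (principal_E0_sub mn))) => u _.
by rewrite Kqm; ring.
Qed.

End DegreeOne.

End TwoRegular.

Lemma cycle_deg1_L_effective (V : finType) (e : V -> V -> nat) (W : {set V}) :
  multigraph e -> is_cycleW e W ->
  forall b : divisor V, deg_div W b = 1 -> L_effective e W b.
Proof.
move=> me [Wconn _ deg2] b b1.
have [n [c c_enum]] := two_regular_cyclic_enum me deg2 Wconn.1.
exact (cyclic_enum_deg1_L_effective deg2 c_enum (cyclic_enum_onto me Wconn c_enum) b1).
Qed.

Theorem mainTheorem4 (V : finType) (e : V -> V -> nat) (v : V)
  (V1 U : {set V}) (f : divisor V) :
  multigraph e ->
  connectedW e [set: V] ->
  cut_vertex e v ->
  decomposes e v V1 U ->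
  is_cycleW e U ->
  bad e U (zero_div v U f) ->
  forall r : int,
    is_rank e [set: V] f r <->
    is_rank e V1 (sub_div (contr_div v U f) (eps v)) r.
Proof.
move=> me _ _ hdec hcyc hbad r.
have deg1 := cycle_deg1_L_effective me hcyc.
have hL : L_effective e [set: V] f <->
          L_effective e V1 (sub_div (contr_div v U f) (eps v)).
  by split; [apply: L_effective_contr | apply: L_effective_of_contr].
have hR s : rank_ok e [set: V] f s <->
            rank_ok e V1 (sub_div (contr_div v U f) (eps v)) s.
  by split; [apply: rank_ok_contr | apply: rank_ok_of_contr].
split; first by apply: (is_rank_transfer hL hR).
by apply: is_rank_transfer => [|s]; apply: iff_sym.
Qed.
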